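(* Let $X$ be a set. For every perfect map $f\colon\mathbb{V}^{\downarrow}(([0,1]^{\downarrow})^X)\to[0,1]^{\downarrow}$ there exist an at most countable set $Y$, a perfect map $s\colon([0,1]^{\downarrow})^Y\to[0,1]^{\downarrow}$ and a family $(h_y\colon([0,1]^{\downarrow})^X\to[0,1]^{\downarrow})_{y\in Y}$ of perfect maps such that $f=s\circ\langle\Diamond\circ\mathbb{V}^{\downarrow}h_y\rangle_{y\in Y}$.
   Context: A stably compact space is a $T_0$ space that is compact, locally compact, coherent (intersection of two compact saturated sets is compact) and well-filtered; a perfect map is a continuous map such that preimages of compact saturated sets are compact saturated. The order on such a space is the specialization order; $\downarrow$ denotes down-closure. $[0,1]^{\downarrow}$ is the set $[0,1]$ with the topology of Euclidean-open downsets, and $([0,1]^{\downarrow})^X$ carries the product topology (a stably compact space). For a stably compact $Z$, $\mathbb{V}^{\downarrow}Z$ is the set of closed subsets of $Z$ with topology generated by $\{C\mid C\cap U\neq\varnothing\}$ ($U$ open), and $\mathbb{V}^{\downarrow}h(C)=\downarrow h[C]$. $\Diamond\colon\mathbb{V}^{\downarrow}([0,1]^{\downarrow})\to[0,1]^{\downarrow}$ is $A\mapsto\sup A$ (with $\sup\varnothing=0$). $\langle g_y\rangle_{y\in Y}$ denotes the induced map into the product. *)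

From HB Require Import structures.
From mathcomp Require Import all_boot all_order all_algebra.
From mathcomp Require Import mathcomp_extra boolp classical_sets functions cardinality reals.
Set Implicit Arguments. Unset Strict Implicit. Unset Printing Implicit Defensive.
Import Order.TTheory GRing.Theory Num.Theory.
Local Open Scope classical_set_scope.
Local Open Scope ring_scope.

Section Topology.
Context {T : Type}.

Definition closed_in (op : set (set T)) (C : set T) : Prop := op (~` C).

Definition spec_le (op : set (set T)) (x y : T) : Prop :=
  forall U, op U -> U x -> U y.

Definition down (op : set (set T)) (A : set T) : set T :=
  [set x | exists2 y, A y & spec_le op x y].

Definition saturated (op : set (set T)) (A : set T) : Prop :=
  forall x, (forall U, op U -> A `<=` U -> U x) -> A x.

Definition compact_in (op : set (set T)) (A : set T) : Prop :=
  forall G : set (set T), G `<=` op -> A `<=` \bigcup_(U in G) U ->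
    exists G' : set (set T),
      [/\ finite_set G', G' `<=` G & A `<=` \bigcup_(U in G') U].

Definition gen_opens (S : set (set T)) : set (set T) :=
  fun U => forall x, U x ->
    exists F : set (set T),
      [/\ finite_set F, F `<=` S, (forall V, F V -> V x) &
          \bigcap_(V in F) V `<=` U].

End Topology.

Section Maps.
Context {T1 T2 : Type}.

Definition continuous_map (op1 : set (set T1)) (op2 : set (set T2))
  (f : T1 -> T2) : Prop :=
  forall V, op2 V -> op1 (f @^-1` V).

Definition perfect (op1 : set (set T1)) (op2 : set (set T2)) (f : T1 -> T2) :
  Prop :=
  continuous_map op1 op2 f /\
  forall K, compact_in op2 K -> saturated op2 K ->
    compact_in op1 (f @^-1` K) /\ saturated op1 (f @^-1` K).

End Maps.

Definition prod_opens (X T : Type) (op : set (set T)) : set (set (X -> T)) :=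
  gen_opens [set W | exists (x : X) (U : set T), op U /\
                       W = (fun g : X -> T => g x) @^-1` U].

Arguments prod_opens X {T} op.

Definition Vdown (T : Type) (op : set (set T)) := {C : set T | closed_in op C}.

Definition Vdown_opens (T : Type) (op : set (set T)) : set (set (Vdown op)) :=
  gen_opens [set W | exists U : set T, op U /\
                       W = [set C : Vdown op | proj1_sig C `&` U !=set0]].

Arguments Vdown_opens {T} op.

Definition Vdown_map (T1 T2 : Type) (op2 : set (set T2)) (h : T1 -> T2)
  (C : set T1) : set T2 := down op2 (h @` C).

Definition I01 (R : realType) := {x : R | 0 <= x <= 1}.

(* [0,1]^down: the topology of Euclidean-open sets that are closed under
   going up in the real order, so that the
   specialization order is the usual order, closed sets are down-sets and
   Diamond = sup is continuous. *)
Definition I01_opens (R : realType) : set (set (I01 R)) :=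
  fun U =>
    (forall x y : I01 R, U x -> proj1_sig x <= proj1_sig y -> U y) /\
    (forall x : I01 R, U x -> exists2 e : R, 0 < e &
       forall y : I01 R, `|proj1_sig y - proj1_sig x| < e -> U y).

Arguments I01_opens : clear implicits.

Lemma sup_I01 (R : realType) (A : set (I01 R)) :
  0 <= sup ((fun x : I01 R => proj1_sig x) @` A) <= 1.
Proof.
set E := (fun x : I01 R => proj1_sig x) @` A.
have [->|nE] := eqVneq E set0; first by rewrite sup0 lexx ler01.
have ne : E !=set0 by apply/set0P.
have ub : ubound E 1 by move=> _ [x _ <-]; case: x => /= x /andP[].
apply/andP; split; last exact: ge_sup.
case: ne => r Er; have := Er; case=> x _ xr.
have r0 : 0 <= r by rewrite -xr; case: x {xr} => /= x /andP[].
apply: (le_trans r0); apply: (sup_upper_bound (E := E)) => //.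
by split; [by exists r | exists 1].
Qed.

(* Diamond : V^down([0,1]^down) -> [0,1]^down, A |-> sup A (sup of empty = 0),
   defined on arbitrary subsets of [0,1] *)
Definition Diamond (R : realType) (A : set (I01 R)) : I01 R :=
  exist _ (sup ((fun x : I01 R => proj1_sig x) @` A)) (sup_I01 A).

(* A uniform limit of monotone maps [(Y -> [0,1]) -> [0,1]] that are continuous for
   the Euclidean product topology is perfect for the upper topologies: its upper level
   sets are countable intersections of closed subsets of the Tychonoff cube.
   Since [f] is perfect, each level set [{C | f C >= k / 2^(n+2)}] is compact, so
   it is covered by finitely many basic opens "C meets each of the boxes
   B_1, ..., B_m" lying inside [{C | f C > (k - 1) / 2^(n+2)}].  A box is traded
   for a continuous ramp [h_y], equal to 1 on the box and vanishing off a slightly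
   larger one, so that [Diamond (V h_y C)] is 1 when [C] meets the box and 0 unless
   [C] meets the larger one.
   A max-of-min combination of these countably many values approximates [f C]
   within [2^-(n+2)]; clipping makes the approximations converge uniformly
   everywhere, and their limit [s] is perfect and agrees with [f] on the image. *)

From HB Require Import structures.
From mathcomp Require Import all_boot all_order all_algebra.
From mathcomp Require Import mathcomp_extra boolp classical_sets functions cardinality reals.
From mathcomp Require Import finmap interval_inference topology normedtype.
From mathcomp Require Import ring lra.
Set Implicit Arguments. Unset Strict Implicit. Unset Printing Implicit Defensive.
Import Order.TTheory GRing.Theory Num.Theory.
Local Open Scope classical_set_scope.
Local Open Scope ring_scope.
Import numFieldNormedType.Exports.

Section UnitInterval.
Context {R : realType}.
Local Notation I := (I01 R).

Definition ival (x : I) : R := proj1_sig x.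

Lemma ival_ge0 (x : I) : 0 <= ival x. Proof. by case: x => /= r /andP[]. Qed.
Lemma ival_le1 (x : I) : ival x <= 1. Proof. by case: x => /= r /andP[]. Qed.

Lemma ival_inj : injective ival.
Proof.
case=> x px [y py] /= exy; subst y.
by congr exist; apply: bool_irrelevance.
Qed.

Definition clamp01 (r : R) : R := Num.max 0 (Num.min r 1).

Lemma clamp01_itv r : 0 <= clamp01 r <= 1.
Proof. by rewrite le_max lexx ge_max ler01 ge_min lexx orbT. Qed.

Lemma clamp01_id r : 0 <= r <= 1 -> clamp01 r = r.
Proof. by case/andP=> r0 r1; rewrite /clamp01 (min_l r1) (max_r r0). Qed.

Lemma clamp01_lip a b : `|clamp01 a - clamp01 b| <= `|a - b|.
Proof.
have lip_of (c : R) (F : R -> R) : (F = Num.max c \/ F = Num.min ^~ c) ->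
    forall x y, `|F x - F y| <= `|x - y|.
  by case=> -> x y /=; case: (ltP c x); case: (ltP c y); case: (ltP x c);
    case: (ltP y c); rewrite ?subrr ?normr0 ?normr_ge0 // => *;
    case: (lerP 0 (x - y)) => xy; rewrite ?(ger0_norm xy) ?(ltr0_norm xy) ler_norml;
    apply/andP; split; lra.
exact: le_trans (lip_of 0 _ (or_introl erefl) _ _) (lip_of 1 _ (or_intror erefl) _ _).
Qed.

Lemma dist_min_lt (a b a' b' e : R) : `|a' - a| < e -> `|b' - b| < e ->
  `|Num.min a' b' - Num.min a b| < e.
Proof.
rewrite !ltr_norml => /andP[? ?] /andP[? ?].
by case: (ltP a b) => ?; case: (ltP a' b') => ?; apply/andP; split; lra.
Qed.

Lemma dist_max_lt (a b a' b' e : R) : `|a' - a| < e -> `|b' - b| < e ->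
  `|Num.max a' b' - Num.max a b| < e.
Proof.
rewrite !ltr_norml => /andP[? ?] /andP[? ?].
by case: (ltP a b) => ?; case: (ltP a' b') => ?; apply/andP; split; lra.
Qed.

Definition mkI (r : R) : I := exist _ (clamp01 r) (clamp01_itv r).

Lemma mkI_ival (x : I) : mkI (ival x) = x.
Proof. by apply: ival_inj; rewrite /= clamp01_id ?ival_ge0 ?ival_le1. Qed.

End UnitInterval.

Section Dyadic.
Context {R : realType}.

Lemma exists_expN_lt (x : R) : 0 < x -> exists n, 2 ^- n < x.
Proof.
move=> x0; have x'0 : 0 <= x^-1 by rewrite invr_ge0 ltW.
have /andP[_ lt_x] := truncn_itv x'0.
exists (Num.truncn x^-1); rewrite -[_^-1]mul1r ltr_pdivrMr ?exprn_gt0 //.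
have : (Num.truncn x^-1).+1%:R <= 2 ^+ Num.truncn x^-1 :> R.
  by rewrite -natrX ler_nat ltn_expl.
have : x * x^-1 = 1 by rewrite divff ?gt_eqF.
nra.
Qed.

Lemma expN_S n : 2 ^- n.+1 = 2 ^- n / 2 :> R.
Proof. by rewrite exprS invfM mulrC. Qed.

Lemma expN_gt0 n : 0 < 2 ^- n :> R.
Proof. by rewrite invr_gt0 exprn_gt0. Qed.

Lemma expN_squeeze (x c : R) : (forall n, `|x| <= c * 2 ^- n) -> x = 0.
Proof.
move=> le_x; apply/normr0_eq0/eqP; rewrite eq_le normr_ge0 andbT leNgt; apply/negP => x0.
have c0 : 0 < c by have := le_x 0%N; rewrite expr0 invr1 mulr1; lra.
have xc : 0 < `|x| / c by rewrite divr_gt0.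
have [n] := exists_expN_lt xc; rewrite ltr_pdivlMr // mulrC => lt_n.
by have := le_x n; lra.
Qed.

End Dyadic.

Section MonoCont.
Context {R : realType} {Y : Type}.
Local Notation I := (I01 R).
Implicit Types (phi psi : (Y -> I) -> R) (g : Y -> I).

Definition ptwise_le (g g' : Y -> I) := forall y, ival (g y) <= ival (g' y).

Definition close_on (L : seq Y) (d : R) (g g' : Y -> I) :=
  forall y, List.In y L -> `|ival (g' y) - ival (g y)| < d.

(* Monotone, and continuous for the product of the Euclidean topologies. *)
Definition mono_cont phi :=
  (forall g g', ptwise_le g g' -> phi g <= phi g') /\
  (forall g e, 0 < e -> exists L d, 0 < d /\
     forall g', close_on L d g g' -> `|phi g' - phi g| < e).

Lemma mono_cont_ext phi psi : phi =1 psi -> mono_cont phi -> mono_cont psi.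
Proof. by move=> /funext <-. Qed.

Lemma close_on_cat L1 L2 d1 d2 g g' : close_on (L1 ++ L2) (Num.min d1 d2) g g' ->
  close_on L1 d1 g g' /\ close_on L2 d2 g g'.
Proof.
move=> close; split=> y Ly.
  by have := close y (List.in_or_app _ _ _ (or_introl Ly)); rewrite lt_min => /andP[].
by have := close y (List.in_or_app _ _ _ (or_intror Ly)); rewrite lt_min => /andP[].
Qed.

Lemma mono_cont_cst (c : R) : mono_cont (fun=> c).
Proof.
split=> // g e e0; exists [::], 1; split=> // g' _.
by rewrite subrr normr0.
Qed.

Lemma mono_cont_coord (y : Y) : mono_cont (fun g => ival (g y)).
Proof.
split=> [g g' le_gg'|g e e0]; first exact: le_gg'.
by exists [:: y], e; split=> // g' close; apply: close; left.
Qed.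

Lemma mono_cont_addr phi c : mono_cont phi -> mono_cont (fun g => phi g + c).
Proof.
case=> mphi cphi; split=> [g g' le_gg'|g e e0]; first by rewrite lerD2r mphi.
have [L [d [d0 close]]] := cphi g e e0; exists L, d; split=> // g' gg'.
by rewrite opprD addrACA subrr addr0; apply: close.
Qed.

Lemma mono_cont_scale phi c : 0 <= c -> mono_cont phi -> mono_cont (fun g => c * phi g).
Proof.
move=> c0 [mphi cphi]; split=> [g g' le_gg'|g e e0]; first by rewrite ler_wpM2l ?mphi.
have c1 : 0 < c + 1 by lra.
have [L [d [d0 close]]] := cphi g (e / (c + 1)) (divr_gt0 e0 c1).
exists L, d; split=> // g' /close lt_e; rewrite -mulrBr normrM (ger0_norm c0).
apply: (le_lt_trans (ler_wpM2l c0 (ltW lt_e))).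
by rewrite mulrA ltr_pdivrMr //; nra.
Qed.

Lemma mono_cont_min phi psi :
  mono_cont phi -> mono_cont psi -> mono_cont (fun g => Num.min (phi g) (psi g)).
Proof.
move=> [mphi cphi] [mpsi cpsi]; split=> [g g' le_gg'|g e e0].
  by rewrite le_min !ge_min mphi ?mpsi ?orbT.
have [L1 [d1 [d10 close1]]] := cphi g e e0; have [L2 [d2 [d20 close2]]] := cpsi g e e0.
exists (L1 ++ L2), (Num.min d1 d2); split; first by rewrite lt_min d10 d20.
by move=> g' /close_on_cat[/close1 ? /close2 ?]; apply: dist_min_lt.
Qed.

Lemma mono_cont_max phi psi :
  mono_cont phi -> mono_cont psi -> mono_cont (fun g => Num.max (phi g) (psi g)).
Proof.
move=> [mphi cphi] [mpsi cpsi]; split=> [g g' le_gg'|g e e0].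
  by rewrite ge_max !le_max mphi ?mpsi ?orbT.
have [L1 [d1 [d10 close1]]] := cphi g e e0; have [L2 [d2 [d20 close2]]] := cpsi g e e0.
exists (L1 ++ L2), (Num.min d1 d2); split; first by rewrite lt_min d10 d20.
by move=> g' /close_on_cat[/close1 ? /close2 ?]; apply: dist_max_lt.
Qed.

Lemma mono_cont_bigmin (J : Type) (r : seq J) (P : pred J) (c : R)
    (F : J -> (Y -> I) -> R) : (forall j, mono_cont (F j)) ->
  mono_cont (fun g => \big[Num.min/c]_(j <- r | P j) F j g).
Proof.
move=> mF; elim: r => [|j r IH].
  by apply: mono_cont_ext (mono_cont_cst c) => g; rewrite big_nil.
case: (boolP (P j)) => Pj.
  by apply: mono_cont_ext (mono_cont_min (mF j) IH) => g; rewrite big_cons Pj.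
by apply: mono_cont_ext IH => g; rewrite big_cons (negbTE Pj).
Qed.

Lemma mono_cont_bigmax (J : Type) (r : seq J) (P : pred J) (c : R)
    (F : J -> (Y -> I) -> R) : (forall j, mono_cont (F j)) ->
  mono_cont (fun g => \big[Num.max/c]_(j <- r | P j) F j g).
Proof.
move=> mF; elim: r => [|j r IH].
  by apply: mono_cont_ext (mono_cont_cst c) => g; rewrite big_nil.
case: (boolP (P j)) => Pj.
  by apply: mono_cont_ext (mono_cont_max (mF j) IH) => g; rewrite big_cons Pj.
by apply: mono_cont_ext IH => g; rewrite big_cons (negbTE Pj).
Qed.

End MonoCont.

Section SeqSets.
Context {A : Type}.

Definition seq_set (s : seq A) : set A := [set a | List.In a s].

Lemma finite_seq_set (s : seq A) : finite_set (seq_set s).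
Proof.
elim: s => [|a s IH].
  by have -> : seq_set [::] = set0 by apply/seteqP; split.
have -> : seq_set (a :: s) = a |` seq_set s.
  by apply/seteqP; split=> x /= [->|?]; by [left|right].
by rewrite finite_setU; split; [exact: finite_set1|].
Qed.

Lemma finite_set_seq (F : set A) : finite_set F -> exists s, F = seq_set s.
Proof.
move=> /(finite_seqP (F : set {classic A})).1 [s Fs]; exists s.
apply/seteqP; split=> x; rewrite Fs /=.
  by elim: s {Fs} => //= b s IH; rewrite inE => /orP[/eqP ->|/IH]; by [left|right].
by elim: s {Fs} => //= b s IH [->|/IH]; rewrite inE ?eqxx // => ->; rewrite orbT.
Qed.

Lemma seq_choice {B : Type} (P : A -> B -> Prop) (s : seq A) :
  (forall a, List.In a s -> exists b, P a b) ->
  exists s' : seq B, (forall b, List.In b s' -> exists2 a, List.In a s & P a b) /\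
     (forall a, List.In a s -> exists2 b, List.In b s' & P a b).
Proof.
elim: s => [|a s IH] Ps; first by exists [::].
have [b Pab] := Ps a (or_introl erefl).
have [s' [s's ss']] := IH (fun a' sa' => Ps a' (or_intror sa')).
exists (b :: s'); split=> [b' [<-|/s's[a' ? ?]]|a' [<-|/ss'[b' ? ?]]].
- by exists a => //; left.
- by exists a' => //; right.
- by exists b => //; left.
- by exists b' => //; right.
Qed.

Lemma seq_argmin (d : Order.disp_t) (T : orderType d) (v : A -> T) (S : set A)
    (a0 : A) (s : seq A) : S a0 -> (forall a, List.In a s -> S a) ->
  exists2 m, S m & forall a, List.In a s -> (v m <= v a)%O.
Proof.
move=> Sa0; elim: s => [|a s IH] Ss; first by exists a0.
have [m Sm le_m] := IH (fun a' sa' => Ss a' (or_intror sa')).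
have [le_am|le_ma] := leP (v a) (v m).
  exists a => [|a' [<-//|/le_m]]; first by apply: Ss; left.
  exact: le_trans.
exists m => // a' [<-|/le_m //]; exact: ltW.
Qed.

Lemma In_seq_nth (x0 : A) (s : seq A) x : List.In x s ->
  exists2 i, (i < size s)%N & nth x0 s i = x.
Proof.
elim: s => [|a s IH] //= [<-|/IH[i lt_i <-]]; first by exists 0%N.
by exists i.+1.
Qed.

Lemma nth_In_seq (x0 : A) (s : seq A) i : (i < size s)%N -> List.In (nth x0 s i) s.
Proof. by elim: s i => [|a s IH] [|i] //= lt_i; [left|right; exact: IH]. Qed.

End SeqSets.

Section UpperTopology.
Context {R : realType}.
Local Notation I := (I01 R).
Local Notation opI := (I01_opens R).

Lemma open_gt (c : R) : opI [set x : I | c < ival x].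
Proof.
split=> [x y /= cx xy|x /= cx]; first exact: lt_le_trans cx xy.
exists (ival x - c) => [|y /=]; first by rewrite subr_gt0.
by rewrite /ival in cx *; rewrite ltr_norml => /andP[? ?]; lra.
Qed.

Lemma open_gt_base (U : set I) x : opI U -> U x ->
  exists2 c, c < ival x & [set y : I | c < ival y] `<=` U.
Proof.
case=> Uup Unear Ux; have [e e0 near_x] := Unear x Ux.
exists (ival x - e) => [|y /= lt_y]; first lra.
have [le_xy|lt_yx] := leP (ival x) (ival y); first exact: Uup le_xy.
apply: near_x; rewrite ltr_norml; rewrite /ival in lt_y lt_yx *.
by apply/andP; split; lra.
Qed.

Lemma spec_le_I (x y : I) : spec_le opI x y -> ival x <= ival y.
Proof.
move=> le_xy; rewrite leNgt; apply/negP => lt_yx.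
by have := le_xy _ (open_gt (ival y)) lt_yx; rewrite /= ltxx.
Qed.

Definition up_ray (a : R) : set I := [set x | a <= ival x].

Lemma compact_up_ray a : compact_in opI (up_ray a).
Proof.
move=> G opG cover; have [a1|a1] := leP a 1; last first.
  by exists set0; split=> // x; rewrite /up_ray /= => ax; have := ival_le1 x; lra.
have a_mkI : up_ray a (mkI a).
  by rewrite /up_ray /= /clamp01 (min_l a1) le_max lexx orbT.
have [U GU Ua] := cover _ a_mkI.
exists [set U]; split=> [|V ->//|x ax]; first exact: finite_set1.
exists U => //; apply: (proj1 (opG U GU)) Ua _.
by rewrite /= /clamp01 (min_l a1) ge_max ival_ge0.
Qed.

Lemma saturated_up_ray a : saturated opI (up_ray a).
Proof.
move=> x near_x; rewrite /up_ray /= leNgt; apply/negP => xa.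
suff : ival x < ival x by rewrite ltxx.
by apply: (near_x _ (open_gt (ival x))) => y; rewrite /up_ray /=; lra.
Qed.

Lemma compact_has_min (K : set I) : compact_in opI K -> K !=set0 ->
  exists2 m, K m & forall x, K x -> ival m <= ival x.
Proof.
move=> cK [k0 Kk0]; apply: contrapT => no_min.
have below m : K m -> exists2 k, K k & ival k < ival m.
  move=> Km; apply: contrapT => nk; apply: no_min; exists m => // x Kx.
  by rewrite leNgt; apply/negP => xm; apply: nk; exists x.
pose G := (fun k => [set x : I | ival k < ival x]) @` K.
have [|x Kx|G' [/finite_set_seq[s ->] sG' cover]] := cK G.
- by move=> _ [k _ <-]; exact: open_gt.
- by have [k Kk kx] := below x Kx; exists [set y | ival k < ival y] => //; exists k.
have witness W : List.In W s -> exists k, K k /\ W = [set y | ival k < ival y].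
  by move=> /sG'[k Kk <-]; exists k.
have [ks [ksK sks]] := seq_choice witness.
have ksK' k : List.In k ks -> K k by case/ksK=> ? _ [].
have [m Km min_m] := seq_argmin ival Kk0 ksK'.
have [W sW Wm] := cover m Km; have [k ksk [_ eW]] := sks W sW.
by move: Wm; rewrite eW /=; have := min_m k ksk; rewrite ltNge => ->.
Qed.

Lemma compact_saturated_up_ray (K : set I) :
  compact_in opI K -> saturated opI K -> exists a, K = up_ray a.
Proof.
move=> cK sK; have [[k Kk]|K0] := pselect (K !=set0); last first.
  exists 2; apply/seteqP; split=> x /= Kx; first by case: K0; exists x.
  by have := ival_le1 x; rewrite /up_ray /= in Kx; lra.
have [m Km min_m] := compact_has_min cK (ex_intro _ k Kk).
exists (ival m); apply/seteqP; split=> [x /min_m //|x mx].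
by apply: sK => U [Uup _] KU; exact: Uup (KU m Km) mx.
Qed.

End UpperTopology.

Section ProductTopology.
Context {R : realType} {Y : Type}.
Local Notation I := (I01 R).
Local Notation opP := (prod_opens Y (I01_opens R)).

Definition above (L : seq (Y * R)) : set (Y -> I) :=
  [set g | forall p, List.In p L -> p.2 < ival (g p.1)].

Lemma open_above L : opP (above L).
Proof.
move=> g gL.
pose slab p := (fun h : Y -> I => h p.1) @^-1` [set x : I | p.2 < ival x].
exists (slab @` seq_set L); split.
- exact/finite_image/finite_seq_set.
- by move=> _ [p _ <-]; exists p.1, [set x : I | p.2 < ival x]; split=> //; exact: open_gt.
- by move=> _ [p Lp <-]; exact: gL.
- by move=> g' g'L p Lp; exact: (g'L _ (ex_intro2 _ _ p Lp erefl)).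
Qed.

Lemma open_above_base U g : opP U -> U g -> exists L, above L g /\ above L `<=` U.
Proof.
move=> oU Ug; have [F [/finite_set_seq[s ->] sF gF FU]] := oU g Ug.
have single V : List.In V s -> exists p : Y * R, p.2 < ival (g p.1) /\
    forall g', p.2 < ival (g' p.1) -> V g'.
  move=> sV; have [y [W [oW eV]]] := sF V sV.
  have := gF V sV; rewrite eV => /(open_gt_base oW)[c cg cW].
  by exists (y, c); split=> // g' /cW.
have [L [Ls sL]] := seq_choice single.
exists L; split=> [p /Ls[V _ []] //|g' g'L].
by apply: FU => V /sL[p Lp [_ pV]]; exact/pV/g'L.
Qed.

Lemma open_of_above U :
  (forall g, U g -> exists L, above L g /\ above L `<=` U) -> opP U.
Proof.
move=> baseU g Ug; have [L [gL LU]] := baseU g Ug.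
have [F [fF sF gF FL]] := open_above gL.
by exists F; split=> // g' /FL; exact: LU.
Qed.

Lemma mono_cont_lsc (psi : (Y -> I) -> R) g t : mono_cont psi -> t < psi g ->
  exists L, above L g /\ above L `<=` [set g' | t < psi g'].
Proof.
move=> [mpsi cpsi]; rewrite -subr_gt0 => tg; have [L [d [d0 close]]] := cpsi g _ tg.
exists [seq (y, ival (g y) - d) | y <- L]; split.
  by move=> _ /List.in_map_iff[y [<- _]] /=; lra.
move=> g' g'L /=.
pose g'' y := if ival (g' y) <= ival (g y) then g' y else g y.
have le_g'' : ptwise_le g'' g'.
  by move=> y; rewrite /g''; case: ifPn => //; rewrite -ltNge => /ltW.
have close_g'' : close_on L d g g''.
  move=> y Ly; have /= := g'L _ (List.in_map (fun y => (y, ival (g y) - d)) _ _ Ly).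
  rewrite /g''; case: ifPn => le_y lt_y; last by rewrite subrr normr0.
  by rewrite ltr_norml; apply/andP; split; lra.
have := close _ close_g''; have := mpsi _ _ le_g''.
by rewrite ltr_norml => ? /andP[? _]; lra.
Qed.

Lemma continuous_of_lsc (phi : (Y -> I) -> I) :
  (forall g t, t < ival (phi g) ->
     exists L, above L g /\ above L `<=` [set g' | t < ival (phi g')]) ->
  continuous_map opP (I01_opens R) phi.
Proof.
move=> lsc V oV; apply: open_of_above => g Vg.
have [c cg cV] := open_gt_base oV Vg; have [L [gL Lc]] := lsc g c cg.
by exists L; split=> // g' /Lc /cV.
Qed.

Lemma saturated_preimage_up_ray (phi : (Y -> I) -> I) a :
  (forall g g', ptwise_le g g' -> ival (phi g) <= ival (phi g')) ->
  saturated opP (phi @^-1` up_ray a).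
Proof.
move=> mphi g near_g; rewrite /up_ray /= leNgt; apply/negP => lt_a.
pose U := [set g' : Y -> I | exists y, ival (g y) < ival (g' y)].
have oU : opP U.
  apply: open_of_above => g' [y lt_y]; exists [:: (y, ival (g y))].
  by split=> [_ [<-|]//|h /(_ _ (or_introl erefl)) ?]; exists y.
suff [y] : U g by rewrite ltxx.
apply: (near_g U oU) => g' a_g'; apply: contrapT => notU.
suff : ival (phi g') <= ival (phi g) by rewrite /up_ray /= in a_g'; lra.
by apply: mphi => y; rewrite leNgt; apply/negP => lt_y; apply: notU; exists y.
Qed.

End ProductTopology.

(* [compact_cover] is only stated for pointed spaces. *)
HB.instance Definition _ (R : realType) (Y : Type) :=
  isPointed.Build (prod_topology (fun _ : {classic Y} => (R : topologicalType)))
    (fun=> 0).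

Section Compactness.
Context {R : realType} {Y : Type}.
Local Notation I := (I01 R).
Local Notation opP := (prod_opens Y (I01_opens R)).
Local Notation RY := (prod_topology (fun _ : {classic Y} => R)).

Definition clamp_fun (g : Y -> R) : Y -> I := fun y => mkI (g y).

Lemma nbhs_close (g : RY) (M : seq (Y * R)) : (forall p, List.In p M -> 0 < p.2) ->
  nbhs g [set g' : RY | forall p, List.In p M -> `|g' p.1 - g p.1| < p.2].
Proof.
elim: M => [|p M IH] M0; first by apply: filterS filterT => g' _ p [].
have near_p : nbhs g ((fun h : RY => h p.1) @^-1` ball (g p.1) p.2).
  apply: (@proj_continuous {classic Y} (fun=> R) p.1 g).
  by apply/nbhsx_ballx/M0; left.
apply: filterS (filterI near_p (IH (fun q Mq => M0 q (or_intror Mq)))).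
move=> g' [/= ball_p near_M] q [<-|/near_M //].
by move: ball_p; rewrite -ball_normE /ball_ /= distrC.
Qed.

Lemma open_clamp_preimage (U : set (Y -> I)) :
  opP U -> open [set g : RY | U (clamp_fun g)].
Proof.
move=> oU; rewrite openE => g /= Ug; have [L [gL LU]] := open_above_base oU Ug.
pose M := [seq (p.1, ival (clamp_fun g p.1) - p.2) | p <- L].
apply: filterS (@nbhs_close g M _) => [g' near_g|_ /List.in_map_iff[p [<- Lp]]].
  apply: LU => p Lp; have := near_g _ (List.in_map _ _ _ Lp) => /=.
  move/(le_lt_trans (clamp01_lip (g' p.1) (g p.1))).
  by rewrite ltr_norml => /andP[? _]; rewrite /ival /=; lra.
by rewrite subr_gt0; exact: gL.
Qed.

Lemma closed_clamp_ge0 (chi : (Y -> I) -> R) : mono_cont chi ->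
  closed [set g : RY | 0 <= chi (clamp_fun g)].
Proof.
move=> [_ cchi].
have -> : [set g : RY | 0 <= chi (clamp_fun g)] = ~` [set g | chi (clamp_fun g) < 0].
  by apply/seteqP; split=> g /=; rewrite leNgt => /negP.
apply: open_closedC; rewrite openE => g /=; rewrite -oppr_gt0 => chi_neg.
have [L [d [d0 close]]] := cchi (clamp_fun g) _ chi_neg.
apply: filterS (@nbhs_close g [seq (y, d) | y <- L] _) => [g' near_g|]; last first.
  by move=> _ /List.in_map_iff[y [<- _]].
have : close_on L d (clamp_fun g) (clamp_fun g').
  move=> y Ly; apply: le_lt_trans (clamp01_lip _ _) _.
  exact: (near_g _ (List.in_map (fun y => (y, d)) _ _ Ly)).
by move/close; rewrite ltr_norml /= => /andP[_]; lra.
Qed.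

Lemma compact_mono_cont_levels (chi : nat -> (Y -> I) -> R) :
  (forall n, mono_cont (chi n)) -> compact_in opP [set g | forall n, 0 <= chi n g].
Proof.
move=> mchi G opG cover.
pose S := [set g : RY | forall y, `[(0 : R), 1]%classic (g y)] `&`
  \bigcap_(n in [set: nat]) [set g : RY | 0 <= chi n (clamp_fun g)].
have cS : compact S.
  apply: compact_closedI; last by apply: closed_bigI => n _; exact: closed_clamp_ge0.
  exact: (@tychonoff {classic Y} (fun=> R) (fun=> `[(0 : R), 1]%classic)
                     (fun=> @segment_compact R 0 1)).
rewrite compact_cover in cS.
have [|g [_ Sg]|G' sG' coverG'] :=
  cS {classic (set (Y -> I))} G (fun U => [set g : RY | U (clamp_fun g)]).
- by move=> U GU; exact: open_clamp_preimage (opG U GU).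
- by have [U GU Ug] := cover (clamp_fun g) (fun n => Sg n Logic.I); exists U.
exists [set` G']; split=> [|U /= /sG'/set_mem //|g Sg]; first exact: finite_fset.
have clamp_ival : clamp_fun (fun y : {classic Y} => ival (g y)) = g.
  by apply: funext => y; exact: mkI_ival.
have [|U G'U Ug] := coverG' (fun y : {classic Y} => ival (g y)).
  split=> [y|n _]; first by rewrite /= in_itv /= ival_ge0 ival_le1.
  by rewrite /= clamp_ival; exact: Sg.
by exists U => //; rewrite -clamp_ival.
Qed.

Lemma perfect_uniform_limit (phi : (Y -> I) -> I) (u : nat -> (Y -> I) -> R) :
  (forall n, mono_cont (u n)) ->
  (forall e, 0 < e -> exists n, forall g, `|ival (phi g) - u n g| < e) ->
  perfect opP (I01_opens R) phi.
Proof.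
move=> mu lim.
have near k : exists n, forall g, u n g - 2 ^- k < ival (phi g) < u n g + 2 ^- k.
  have [n near_n] := lim (2 ^- k) (expN_gt0 k).
  by exists n => g; rewrite -ltr_distlC distrC.
have [N near_N] := choice near.
have small (e : R) : 0 < e -> exists k, 2 * 2 ^- k < e.
  move=> e0; have e2 : 0 < e / 2 by rewrite divr_gt0.
  by have [k ?] := exists_expN_lt e2; exists k; lra.
have mphi g g' : ptwise_le g g' -> ival (phi g) <= ival (phi g').
  move=> le_gg'; apply/ler_addgt0Pr => e /small[k ke].
  have /andP[? ?] := near_N k g; have /andP[? ?] := near_N k g'.
  by have := (proj1 (mu (N k))) _ _ le_gg'; lra.
split.
  apply: continuous_of_lsc => g t; rewrite -subr_gt0 => /small[k ke].
  have [|L [gL Lt]] :=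
    @mono_cont_lsc _ _ _ g t (mono_cont_addr (- 2 ^- k) (mu (N k))).
    by have /andP[? ?] := near_N k g; lra.
  by exists L; split=> // g' /Lt /=; have /andP[? ?] := near_N k g'; lra.
move=> K cK sK; have [a ->] := compact_saturated_up_ray cK sK.
split; last exact: saturated_preimage_up_ray.
suff -> : phi @^-1` up_ray a = [set g | forall k, 0 <= u (N k) g + (2 ^- k - a)].
  by apply: compact_mono_cont_levels => k; exact: mono_cont_addr.
apply/seteqP; split=> g /=; rewrite /up_ray /=.
  by move=> ag k; have /andP[? ?] := near_N k g; lra.
move=> near_a; apply/ler_addgt0Pr => e /small[k ke].
by have := near_a k; have /andP[? ?] := near_N k g; lra.
Qed.

End Compactness.

Section Ramps.
Context {R : realType} {X : Type}.
Local Notation I := (I01 R).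
Local Notation opP := (prod_opens X (I01_opens R)).

Record ramp := Ramp { ramp_at : X; ramp_lo : R; ramp_wd : {posnum R} }.

Definition ramp_val (p : ramp) (g : X -> I) : R :=
  clamp01 ((ival (g (ramp_at p)) - ramp_lo p) / (ramp_wd p)%:num).

Definition ramps (P : seq ramp) (g : X -> I) : R :=
  \big[Num.min/1]_(p <- P) ramp_val p g.

Definition ramps_fun (P : seq ramp) (g : X -> I) : I := mkI (ramps P g).

Definition hi_box (P : seq ramp) : set (X -> I) :=
  above [seq (ramp_at p, ramp_lo p + (ramp_wd p)%:num) | p <- P].

Definition lo_box (P : seq ramp) : set (X -> I) :=
  above [seq (ramp_at p, ramp_lo p) | p <- P].

Lemma mono_cont_ramp_val p : mono_cont (ramp_val p).
Proof.
have wd0 : 0 <= (ramp_wd p)%:num^-1 by rewrite invr_ge0 ltW.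
apply: mono_cont_ext (mono_cont_max (mono_cont_cst 0) (mono_cont_min
  (mono_cont_addr (- (ramp_lo p / (ramp_wd p)%:num))
     (mono_cont_scale wd0 (mono_cont_coord (ramp_at p)))) (mono_cont_cst 1))).
by move=> g; rewrite /ramp_val mulrBl mulrC.
Qed.

Lemma mono_cont_ramps P : mono_cont (ramps P).
Proof. exact/mono_cont_bigmin/mono_cont_ramp_val. Qed.

Lemma ramps_itv P g : 0 <= ramps P g <= 1.
Proof.
rewrite /ramps bigmin_le_id andbT; apply: le_bigmin => [|p _]; first exact: ler01.
by case/andP: (clamp01_itv ((ival (g (ramp_at p)) - ramp_lo p) / (ramp_wd p)%:num)).
Qed.

Lemma ival_ramps_fun P g : ival (ramps_fun P g) = ramps P g.
Proof. by rewrite /= clamp01_id ?ramps_itv. Qed.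

Lemma perfect_ramps_fun P : perfect opP (I01_opens R) (ramps_fun P).
Proof.
apply: (perfect_uniform_limit (u := fun=> ramps P)) => [_|e e0].
  exact: mono_cont_ramps.
by exists 0%N => g; rewrite ival_ramps_fun subrr normr0.
Qed.

Lemma ramp_val_eq1 p g :
  ramp_lo p + (ramp_wd p)%:num < ival (g (ramp_at p)) -> ramp_val p g = 1.
Proof.
move=> lt_lo; rewrite /ramp_val /clamp01 (min_r _) ?(max_r ler01) //.
by rewrite ler_pdivlMr // mul1r; lra.
Qed.

Lemma ramp_val_gt0 p g : 0 < ramp_val p g -> ramp_lo p < ival (g (ramp_at p)).
Proof.
rewrite /ramp_val /clamp01 lt_max ltxx lt_min ltr01 andbT.
by rewrite pmulr_lgt0 ?invr_gt0 // subr_gt0.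
Qed.

Lemma ramps_eq1 P g : hi_box P g -> ramps P g = 1.
Proof.
rewrite /ramps; elim: P => [|p P IH] hi; first by rewrite big_nil.
have hiP : hi_box P g by move=> q Pq; apply: hi; right.
have hip : ramp_lo p + (ramp_wd p)%:num < ival (g (ramp_at p)).
  by apply: (hi (_, _)); left.
by rewrite big_cons ramp_val_eq1 // IH // minxx.
Qed.

Lemma ramps_gt0 P g : 0 < ramps P g -> lo_box P g.
Proof.
rewrite /ramps; elim: P => [|p P IH]; first by move=> _ ? [].
rewrite big_cons lt_min => /andP[/ramp_val_gt0 ? /IH lo] _ [<-|/lo] //.
Qed.

End Ramps.

Section DiamondBounds.
Context {R : realType} {Z : Type}.
Local Notation I := (I01 R).

Lemma Diamond_eq1 (phi : Z -> I) (C : set Z) z : C z -> ival (phi z) = 1 ->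
  ival (Diamond (Vdown_map (I01_opens R) phi C)) = 1.
Proof.
move=> Cz phi1; set E := (fun x : I => proj1_sig x) @` Vdown_map (I01_opens R) phi C.
have E1 : E 1.
  by exists (phi z); last exact: phi1; exists (phi z); [exists z|move=> U _].
have ubE : ubound E 1 by move=> _ [x _ <-]; exact: ival_le1.
apply/eqP; rewrite eq_le; apply/andP; split; first by apply: ge_sup => //; exists 1.
by apply: sup_upper_bound => //; split; exists 1.
Qed.

Lemma Diamond_gt0 (phi : Z -> I) (C : set Z) :
  0 < ival (Diamond (Vdown_map (I01_opens R) phi C)) ->
  exists2 z, C z & 0 < ival (phi z).
Proof.
pose E := (fun x : I => proj1_sig x) @` Vdown_map (I01_opens R) phi C.
move=> sup_gt0; have {}sup_gt0 : 0 < sup E := sup_gt0.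
have [E0|nE] := eqVneq E set0; first by rewrite E0 sup0 ltxx in sup_gt0.
have [_ [x [w [z Cz <-] le_xw] <-] x0] := sup_gt ((set0P E).1 nE) sup_gt0.
by exists z => //; exact: lt_le_trans x0 (spec_le_I le_xw).
Qed.

End DiamondBounds.

Section LevelCovers.
Context {R : realType} {X : Type}.
Local Notation I := (I01 R).
Local Notation opP := (prod_opens X (I01_opens R)).
Local Notation V := (Vdown opP).

Definition hits (A : set (X -> I)) : set V := [set C | proj1_sig C `&` A !=set0].

Definition hits_hi (Q : seq (seq (@ramp R X))) : set V :=
  [set C | forall P, List.In P Q -> hits (hi_box P) C].

Definition hits_lo (Q : seq (seq (@ramp R X))) : set V :=
  [set C | forall P, List.In P Q -> hits (lo_box P) C].

Lemma open_hits_hi Q : Vdown_opens opP (hits_hi Q).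
Proof.
move=> C QC; exists ((fun P => hits (hi_box P)) @` seq_set Q); split.
- exact/finite_image/finite_seq_set.
- by move=> _ [P _ <-]; exists (hi_box P); split=> //; exact: open_above.
- by move=> _ [P QP <-]; exact: QC.
- by move=> C' QC' P QP; exact: (QC' _ (ex_intro2 _ _ P QP erefl)).
Qed.

Lemma ramp_nbhd (U : set (X -> I)) z : opP U -> U z ->
  exists P, hi_box P z /\ lo_box P `<=` U.
Proof.
move=> oU Uz; have [L [zL LU]] := open_above_base oU Uz.
have steep q : List.In q L -> exists p : ramp,
    [/\ ramp_at p = q.1, ramp_lo p = q.2 &
         ramp_lo p + (ramp_wd p)%:num < ival (z q.1)].
  move=> Lq; have wd0 : 0 < (ival (z q.1) - q.2) / 2.
    by rewrite divr_gt0 ?subr_gt0 ?zL.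
  by exists (Ramp q.1 q.2 (PosNum wd0)); split=> //=; have := zL q Lq; lra.
have [P [PL LP]] := seq_choice steep.
exists P; split=> [_ /List.in_map_iff[p [<- /PL[q _ [-> -> ?]]]] //|g gP].
apply: LU => q /LP[p Pp [<- <- _]].
exact: (gP _ (List.in_map (fun p => (ramp_at p, ramp_lo p)) _ _ Pp)).
Qed.

Lemma open_hits_nbhd (O : set V) C : Vdown_opens opP O -> O C ->
  exists Q, hits_hi Q C /\ hits_lo Q `<=` O.
Proof.
move=> oO OC; have [F [/finite_set_seq[s ->] sF CF FO]] := oO C OC.
have local W : List.In W s -> exists P, hits (hi_box P) C /\ hits (lo_box P) `<=` W.
  move=> sW; have [U [oU eW]] := sF W sW.
  have := CF W sW; rewrite eW => -[z [Cz Uz]].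
  have [P [zP PU]] := ramp_nbhd oU Uz.
  by exists P; split=> [|C' [g [C'g /PU Ug]]]; [exists z|exists g].
have [Q [QW WQ]] := seq_choice local.
exists Q; split=> [P /QW[W _ []] //|C' QC'].
by apply: FO => W /WQ[P QP [_ PW]]; exact/PW/QC'.
Qed.

Lemma level_cover (f : V -> I) t' t : perfect (Vdown_opens opP) (I01_opens R) f ->
  t' < t -> exists QQ : seq (seq (seq ramp)),
  (forall C, t <= ival (f C) -> exists2 Q, List.In Q QQ & hits_hi Q C) /\
  (forall Q, List.In Q QQ -> hits_lo Q `<=` [set C | t' < ival (f C)]).
Proof.
move=> [fcont fcs] tt'.
have cK := (fcs (up_ray t) (@compact_up_ray R t) (@saturated_up_ray R t)).1.
have oO := fcont _ (open_gt t').
pose G := [set hits_hi Q | Q in [set Q | hits_lo Q `<=` [set C | t' < ival (f C)]]].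
have [|C tC|G' [/finite_set_seq[s ->] sG' cover]] := cK G.
- by move=> _ [Q _ <-]; exact: open_hits_hi.
- have [|Q [QC Qt']] := open_hits_nbhd oO (C := C).
    by rewrite /= /up_ray /= in tC *; lra.
  by exists (hits_hi Q) => //; exists Q.
have witness W : List.In W s ->
    exists Q, hits_lo Q `<=` [set C | t' < ival (f C)] /\ hits_hi Q = W.
  by case/sG'=> Q ? ?; exists Q.
have [QQ [QQs sQQ]] := seq_choice witness.
exists QQ; split=> [C tC|Q /QQs[W _ []] //].
have [W sW WC] := cover C tC; have [Q QQQ [_ eW]] := sQQ W sW.
by exists Q; rewrite // eW.
Qed.

End LevelCovers.

Section ClippedLimit.
Context {R : realType} {Y : Type} (A : nat -> (Y -> I01 R) -> R).
Local Notation I := (I01 R).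
Hypothesis mA : forall n, mono_cont (A n).
Hypothesis A01 : forall n g, 0 <= A n g <= 1.

(* Clipping each term to within [2^-n] of its predecessor makes the sequence
   uniformly Cauchy, and changes nothing wherever [A] already converges fast. *)
Fixpoint clipped n g : R :=
  if n is m.+1 then
    Num.max (clipped m g - 2 ^- m) (Num.min (A m.+1 g) (clipped m g + 2 ^- m))
  else A 0 g.

Lemma clipped_itv n g : 0 <= clipped n g <= 1.
Proof.
elim: n => [|n IH] /=; first exact: A01.
have := A01 n.+1 g; have := @expN_gt0 R n; move: IH => /andP[? ?] ? /andP[? ?].
apply/andP; split.
  by rewrite le_max le_min; apply/orP; right; apply/andP; split; lra.
by rewrite ge_max ge_min; apply/andP; split; [lra|apply/orP; left].
Qed.

Lemma clipped_step n g : `|clipped n.+1 g - clipped n g| <= 2 ^- n.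
Proof.
have := @expN_gt0 R n => e0.
have lo : clipped n g - 2 ^- n <= clipped n.+1 g by rewrite /= le_max lexx.
have hi : clipped n.+1 g <= clipped n g + 2 ^- n.
  by rewrite /= ge_max ge_min lexx orbT andbT; lra.
by rewrite ler_norml; apply/andP; split; lra.
Qed.

Lemma mono_cont_clipped n : mono_cont (clipped n).
Proof.
elim: n => [|n IH] /=; first exact: mA.
exact: mono_cont_max (mono_cont_addr _ IH)
  (mono_cont_min (mA _) (mono_cont_addr _ IH)).
Qed.

Lemma clipped_drift m n g : (m <= n)%N ->
  `|clipped n g - clipped m g| <= 2 * 2 ^- m - 2 * 2 ^- n.
Proof.
move=> /subnK <-; elim: (n - m)%N => [|k IH]; first by rewrite add0n !subrr normr0.
have := clipped_step (k + m) g; rewrite addSn expN_S => step.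
by apply: le_trans (ler_distD (clipped (k + m) g) _ _) _; lra.
Qed.

Definition clim g : R := sup (range (fun n => clipped n g - 2 * 2 ^- n)).

Lemma clim_near n g : `|clim g - clipped n g| <= 2 * 2 ^- n.
Proof.
have below m : clipped m g - 2 * 2 ^- m <= clipped n g + 2 * 2 ^- n.
  have := clipped_drift g (leq_maxl m n); have := clipped_drift g (leq_maxr m n).
  by rewrite !ler_norml => /andP[? ?] /andP[? ?]; have := @expN_gt0 R (maxn m n); lra.
have supE : has_sup (range (fun m => clipped m g - 2 * 2 ^- m)).
  split; first by exists (clipped 0 g - 2 * 2 ^- 0), 0%N.
  by exists (clipped n g + 2 * 2 ^- n) => _ [m _ <-].
have lb : clipped n g - 2 * 2 ^- n <= clim g by apply: sup_upper_bound supE _ _; exists n.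
have ub : clim g <= clipped n g + 2 * 2 ^- n by apply: ge_sup supE.1 _ => _ [m _ <-].
by rewrite ler_norml; apply/andP; split; lra.
Qed.

Definition limit_fun g : I := mkI (clim g).

Lemma perfect_limit_fun : perfect (prod_opens Y (I01_opens R)) (I01_opens R) limit_fun.
Proof.
apply: (perfect_uniform_limit (u := clipped)) => [|e e0]; first exact: mono_cont_clipped.
have e2 : 0 < e / 2 by rewrite divr_gt0.
have [n lt_n] := exists_expN_lt e2; exists n => g.
rewrite -[X in `|_ - X|](clamp01_id (clipped_itv n g)).
by apply: le_lt_trans (clamp01_lip _ _) _; apply: le_lt_trans (clim_near n g) _; lra.
Qed.

Lemma limit_fun_exact g (F : R) : 0 <= F <= 1 ->
  (forall n, `|A n g - F| < 2 ^- n.+2) -> ival (limit_fun g) = F.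
Proof.
move=> F01 near_F.
have clippedA n : clipped n g = A n g.
  elim: n => [//|n IH] /=; rewrite IH.
  have := near_F n; have := near_F n.+1; have := @expN_gt0 R n.
  rewrite !expN_S !ltr_distl => ? /andP[? ?] /andP[? ?].
  by rewrite (@min_l _ _ (A n.+1 g)) ?(@max_r _ _ (A n g - _)); lra.
suff clim_F : clim g = F by rewrite /ival /= clim_F clamp01_id.
apply/eqP; rewrite -subr_eq0; apply/eqP/(@expN_squeeze _ _ 3) => n.
have := clim_near n g; have := near_F n; rewrite !expN_S clippedA !ler_norml ltr_norml.
by move=> /andP[? ?] /andP[? ?]; apply/andP; split; lra.
Qed.

End ClippedLimit.

Section Staircase.
Context {R : realType} {X : Type}.
Local Notation I := (I01 R).
Local Notation V := (Vdown (prod_opens X (I01_opens R))).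
Local Notation Y := ((nat * nat) * (nat * nat))%type.

Definition mesh n : R := 2 ^- n.+2.
Definition grid n k : R := k%:R * mesh n.

Variables (f : V -> I) (D : nat * nat -> seq (seq (seq (@ramp R X)))).

(* Out-of-range indices give the constant map 1; [cell] never looks at them. *)
Definition probe (y : Y) : (X -> I) -> I :=
  ramps_fun (nth [::] (nth [::] (D y.1) y.2.1) y.2.2).

Definition probes (C : V) : Y -> I :=
  fun y => Diamond (Vdown_map (I01_opens R) (probe y) (proj1_sig C)).

Definition cell n k (u : Y -> I) : R :=
  \big[Num.max/0]_(j < size (D (n, k)))
    \big[Num.min/1]_(i < size (nth [::] (D (n, k)) j))
      ival (u (n, k, (j : nat, i : nat))).

Definition stair n (u : Y -> I) : R :=
  \big[Num.max/0]_(k < (2 ^ n.+2).+1) (grid n k * cell n k u).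

Lemma grid_ge0 n k : 0 <= grid n k.
Proof. by rewrite mulr_ge0 // ltW // expN_gt0. Qed.

Lemma cell_itv n k u : 0 <= cell n k u <= 1.
Proof.
rewrite bigmax_ge_id; apply: bigmax_le => [|j _]; first exact: ler01.
exact: bigmin_le_id.
Qed.

Lemma stair_itv n u : 0 <= stair n u <= 1.
Proof.
rewrite bigmax_ge_id; apply: bigmax_le => [|k _]; first exact: ler01.
have grid1 : grid n k <= 1.
  rewrite /grid /mesh ler_pdivrMr ?exprn_gt0 // mul1r -natrX ler_nat.
  by rewrite -ltnS.
have := grid_ge0 n k; have /andP[? ?] := cell_itv n k u; nra.
Qed.

Lemma mono_cont_stair n : mono_cont (stair n).
Proof.
apply: mono_cont_bigmax => k; apply: mono_cont_scale (grid_ge0 n k) _.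
by apply: mono_cont_bigmax => j; apply: mono_cont_bigmin => i; exact: mono_cont_coord.
Qed.

Hypothesis D_spec : forall n k,
  (forall C, grid n k <= ival (f C) -> exists2 Q, List.In Q (D (n, k)) & hits_hi Q C) /\
  (forall Q, List.In Q (D (n, k)) ->
     hits_lo Q `<=` [set C | grid n k - mesh n < ival (f C)]).

Lemma cell_probes_ge1 n k C : grid n k <= ival (f C) -> 1 <= cell n k (probes C).
Proof.
move=> /(D_spec n k).1[Q /(In_seq_nth [::])[j lt_j eQ] QC].
apply: (bigmax_sup (Ordinal lt_j)) => //; apply: le_bigmin => // -[i lt_i] _.
have lt_iQ : (i < size Q)%N by rewrite -eQ.
have [z [Cz Pz]] := QC _ (nth_In_seq [::] lt_iQ).
rewrite /probes (Diamond_eq1 Cz) // /probe ival_ramps_fun /= eQ.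
exact: ramps_eq1.
Qed.

Lemma cell_probes_gt0 n k C :
  0 < cell n k (probes C) -> grid n k - mesh n < ival (f C).
Proof.
move=> cell_gt0; pose Q j := nth [::] (D (n, k)) j.
have [j] : exists j : 'I_(size (D (n, k))),
    0 < \big[Num.min/1]_(i < size (Q j)) ival (probes C (n, k, (j : nat, i : nat))).
  apply: contrapT => no_j; move: cell_gt0; rewrite ltNge => /negP; apply.
  apply/bigmax_leP; split=> // j _; rewrite leNgt; apply/negP => ?; apply: no_j.
  by exists j.
move=> /bigmin_gtP[_ probes_gt0].
apply: ((D_spec n k).2 (Q j) (nth_In_seq [::] (ltn_ord j)) C).
move=> P /(In_seq_nth [::])[i lt_i eP].
have [z Cz] := Diamond_gt0 (probes_gt0 (Ordinal lt_i) isT).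
rewrite /probe ival_ramps_fun /= -/(Q j) eP => /ramps_gt0 zP.
by exists z.
Qed.

Lemma stair_near n C : `|stair n (probes C) - ival (f C)| < mesh n.
Proof.
have mesh0 : 0 < mesh n by exact: expN_gt0.
have F01 := ival_ge0 (f C); have F1 := ival_le1 (f C).
rewrite ltr_norml; apply/andP; split.
  have FN : 0 <= ival (f C) / mesh n by rewrite divr_ge0 // ltW.
  have /andP[le_k lt_k] := truncn_itv FN; set k := Num.truncn _ in le_k lt_k.
  have kN : (k < (2 ^ n.+2).+1)%N.
    rewrite ltnS -(ler_nat R) natrX; apply: le_trans le_k _.
    by rewrite /mesh ler_pdivrMr ?exprn_gt0 // mulrC mulVf ?mulr1 ?expf_neq0.
  have grid_k : grid n k <= ival (f C) by rewrite /grid -ler_pdivlMr.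
  have lt_F : ival (f C) < grid n k + mesh n.
    by move: lt_k; rewrite ltr_pdivrMr // -natr1 mulrDl mul1r.
  have : grid n k * cell n k (probes C) <= stair n (probes C).
    by apply: (bigmax_sup (Ordinal kN)).
  have := cell_probes_ge1 grid_k; have := grid_ge0 n k; nra.
rewrite ltrBlDr; apply/bigmax_ltP; split=> [|k _]; first lra.
have /andP[? ?] := cell_itv n k (probes C); have := grid_ge0 n k.
by have [?|/cell_probes_gt0 ?] := lerP (cell n k (probes C)) 0; nra.
Qed.

End Staircase.

Theorem theorem5p18 (R : realType) (X : Type)
  (f : Vdown (prod_opens X (I01_opens R)) -> I01 R) :
  perfect (Vdown_opens (prod_opens X (I01_opens R))) (I01_opens R) f ->
  exists (Y : Type) (s : (Y -> I01 R) -> I01 R)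
         (h : Y -> (X -> I01 R) -> I01 R),
    [/\ countable [set: Y],
        perfect (prod_opens Y (I01_opens R)) (I01_opens R) s,
        (forall y, perfect (prod_opens X (I01_opens R)) (I01_opens R) (h y)) &
        forall C, f C =
          s (fun y => Diamond (Vdown_map (I01_opens R) (h y) (proj1_sig C)))].
Proof.
move=> perfect_f.
have mesh_lt (nk : nat * nat) : grid nk.1 nk.2 - mesh nk.1 < grid nk.1 nk.2 :> R.
  by rewrite ltrBlDr ltrDl expN_gt0.
have [D D_spec] := choice (fun nk => level_cover perfect_f (mesh_lt nk)).
exists ((nat * nat) * (nat * nat))%type,
  (limit_fun (stair D)), (probe D); split.
- exact: countableP.
- exact: perfect_limit_fun (mono_cont_stair D) (stair_itv D).
- by move=> y; exact: perfect_ramps_fun.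
- move=> C; apply: ival_inj; symmetry.
  apply: limit_fun_exact; first by rewrite ival_ge0 ival_le1.
  by move=> n; exact: (stair_near (fun n k => D_spec (n, k))).
Qed.
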